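(* Let $G_{\lambda,k}$ be a skeleton of a connected graph $G$, and let $G''=G_{(\lambda,k)_{(2,2)}}$ be the $(2,2)$-skeleton of $G_{\lambda,k}$. If two vertices of $G''$ are $2$-disjoint in $G''$, then the sets of vertices of $G_{\lambda,k}$ they come from (their preimages under the natural map $G_{\lambda,k}\to G''$) are $3$-disjoint in $G_{\lambda,k}$.
   Context: $d$ is the graph metric of the relevant graph. Sets $X,Y$ are $r$-disjoint if $d(a,b)>r$ for all $a\in X,b\in Y$. A set $X$ is $k$-connected if any two of its points are joined by a finite sequence in $X$ with consecutive distances $\le k$. Skeleton $\Gamma_{\lambda,k}$ of a connected graph $\Gamma$ (root $x_0$, scale $\lambda\ge1$, connectivity $k\ge1$): layers $A_{N,\lambda}=\{x: N\lambda<d(x,x_0)\le(N+1)\lambda\}$, $N\in\mathbb Z$; blocks are the maximal $k$-connected subsets of layers (distances in $\Gamma$); $\Gamma_{\lambda,k}$ has a vertex per block and an edge between two blocks iff an edge of $\Gamma$ joins them; the natural map sends each vertex to its block. $G_{(\lambda,k)_{(2,2)}}$ is the skeleton of the graph $G_{\lambda,k}$ (with its own metric) with scale $2$ and connectivity $2$, rooted at the block containing the root of $G$. *)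

(* graphs are arbitrary (possibly infinite) types with an
   adjacency relation; distances are handled relationally via walks. *)
From Stdlib Require Import Reals ZArith.
Open Scope R_scope.

Record graph : Type := Graph { vtx : Type; adj : vtx -> vtx -> Prop }.

Inductive reach (G : graph) : nat -> vtx G -> vtx G -> Prop :=
| reach0 x : reach G 0 x x
| reachS n x y z : adj G x y -> reach G n y z -> reach G (S n) x z.

Definition dist_eq (G : graph) (x y : vtx G) (n : nat) : Prop :=
  reach G n x y /\ forall m, (m < n)%nat -> ~ reach G m x y.

Definition dist_le (G : graph) (x y : vtx G) (r : R) : Prop :=
  exists n, reach G n x y /\ INR n <= r.

Definition connected (G : graph) : Prop :=
  forall x y : vtx G, exists n, reach G n x y.

Definition simple_graph (G : graph) : Prop :=
  (forall x y, adj G x y -> adj G y x) /\ (forall x, ~ adj G x x).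

Definition r_disjoint (G : graph) (r : R) (X Y : vtx G -> Prop) : Prop :=
  forall a b, X a -> Y b -> ~ dist_le G a b r.

Inductive kchain (G : graph) (k : R) (X : vtx G -> Prop) : vtx G -> vtx G -> Prop :=
| kchain0 x : X x -> kchain G k X x x
| kchainS x y z : X x -> dist_le G x y k -> kchain G k X y z -> kchain G k X x z.

Definition k_connected (G : graph) (k : R) (X : vtx G -> Prop) : Prop :=
  forall a b, X a -> X b -> kchain G k X a b.

Definition layer (G : graph) (x0 : vtx G) (lam : R) (N : Z) (x : vtx G) : Prop :=
  exists n, dist_eq G x x0 n /\ IZR N * lam < INR n <= (IZR N + 1) * lam.

Definition is_block (G : graph) (x0 : vtx G) (lam k : R) (B : vtx G -> Prop) : Prop :=
  exists N : Z,
    (forall x, B x -> layer G x0 lam N x) /\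
    (exists x, B x) /\
    k_connected G k B /\
    (forall C : vtx G -> Prop,
        (forall x, C x -> layer G x0 lam N x) -> k_connected G k C ->
        (forall x, B x -> C x) -> forall x, C x -> B x).

Definition skeleton (G : graph) (x0 : vtx G) (lam k : R) : graph :=
  {| vtx := { B : vtx G -> Prop | is_block G x0 lam k B };
     adj := fun B1 B2 =>
       B1 <> B2 /\ exists x y, proj1_sig B1 x /\ proj1_sig B2 y /\ adj G x y |}.

(* A walk of length at most 3 in G_{lam,k} between the two preimages passes through
   vertices that all lie in blocks of G'', consecutive blocks being equal or adjacent.
   Distances to the root change by at most one per step, so of the four vertices of a
   walk of length 3, two at walk distance at most 2 lie in the same layer of width 2,
   hence (connectivity 2) in the same block; the walk of blocks therefore shortens to
   length at most 2, contradicting 2-disjointness. *)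

From Stdlib Require Import Reals ZArith Lia Lra Wf_nat.
From Stdlib Require Import Classical FunctionalExtensionality PropExtensionality ProofIrrelevance.
Open Scope R_scope.

Definition sym_adj (T : graph) : Prop := forall x y, adj T x y -> adj T y x.

Section Walks.

Variable T : graph.

Lemma reach_cat n m x y z : reach T n x y -> reach T m y z -> reach T (n + m) x z.
Proof. induction 1; intros; simpl; [assumption | econstructor; eauto]. Qed.

Lemma reach_rcons n x y z : reach T n x y -> adj T y z -> reach T (S n) x z.
Proof.
  intros Hxy Hyz. replace (S n) with (n + 1)%nat by lia.
  apply reach_cat with y; [assumption | econstructor; eauto; constructor].
Qed.

Lemma reach_sym n x y : sym_adj T -> reach T n x y -> reach T n y x.
Proof.
  intros Hsym; induction 1; [constructor | apply reach_rcons with y; auto].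
Qed.

Lemma dist_le_sym x y r : sym_adj T -> dist_le T x y r -> dist_le T y x r.
Proof. intros Hsym [n [Hn Hr]]. exists n; split; [apply reach_sym |]; auto. Qed.

Lemma dist_le_refl x r : 0 <= r -> dist_le T x x r.
Proof. intros Hr. exists 0%nat; split; [constructor | simpl; lra]. Qed.

Lemma dist_le_trans x y z r s :
  dist_le T x y r -> dist_le T y z s -> dist_le T x z (r + s).
Proof.
  intros [n [Hn Hr]] [m [Hm Hs]]. exists (n + m)%nat.
  split; [apply reach_cat with y; auto | rewrite plus_INR; lra].
Qed.

Lemma dist_le_weaken x y r s : r <= s -> dist_le T x y r -> dist_le T x y s.
Proof. intros Hrs [n [Hn Hr]]. exists n; split; [auto | lra]. Qed.

Lemma dist_le_adj x y : adj T x y -> dist_le T x y 1.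
Proof. intros Hxy. exists 1%nat; split; [econstructor; eauto; constructor | simpl; lra]. Qed.

Lemma dist_le_adj2 x y z : adj T x y -> adj T y z -> dist_le T x z 2.
Proof.
  intros Hxy Hyz. replace 2 with (1 + 1) by lra.
  apply dist_le_trans with y; apply dist_le_adj; assumption.
Qed.

Lemma dist_eq_exists x r n : reach T n x r -> exists d, dist_eq T x r d.
Proof.
  intros Hn.
  destruct (dec_inh_nat_subset_has_unique_least_element (fun m => reach T m x r))
    as [d [[Hd Hleast] _]]; [intro; apply classic | eauto |].
  exists d; split; [assumption |].
  intros m Hm Hreach. specialize (Hleast m Hreach). lia.
Qed.

Lemma dist_eq_unique x r n m : dist_eq T x r n -> dist_eq T x r m -> n = m.
Proof.
  intros [Hn Hn_min] [Hm Hm_min].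
  destruct (Nat.lt_total n m) as [Hlt | [Heq | Hlt]];
    [exfalso; exact (Hm_min n Hlt Hn) | exact Heq | exfalso; exact (Hn_min m Hlt Hm)].
Qed.

Lemma dist_eq_adj x y r d :
  sym_adj T -> dist_eq T x r d -> adj T x y ->
  exists d', dist_eq T y r d' /\ (d' <= S d)%nat /\ (d <= S d')%nat.
Proof.
  intros Hsym [Hd Hd_min] Hxy.
  destruct (dist_eq_exists y r (S d)) as [d' [Hd' Hd'_min]]; [econstructor; eauto |].
  exists d'; split; [split; assumption | split].
  - destruct (Nat.le_gt_cases d' (S d)) as [Hle | Hgt]; [assumption |].
    exfalso. apply (Hd'_min (S d) Hgt). econstructor; eauto.
  - destruct (Nat.le_gt_cases d (S d')) as [Hle | Hgt]; [assumption |].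
    exfalso. apply (Hd_min (S d') Hgt). econstructor; eauto.
Qed.

End Walks.

Section Chains.

Variables (T : graph) (k : R).

Lemma kchain_mem_l (X : vtx T -> Prop) x y : kchain T k X x y -> X x.
Proof. destruct 1; assumption. Qed.

Lemma kchain_mem_r (X : vtx T -> Prop) x y : kchain T k X x y -> X y.
Proof. induction 1; assumption. Qed.

Lemma kchain_sub (X Y : vtx T -> Prop) x y :
  (forall z, X z -> Y z) -> kchain T k X x y -> kchain T k Y x y.
Proof.
  intros Hsub; induction 1; [apply kchain0 | apply kchainS with y]; auto.
Qed.

Lemma kchain_rcons X x y z :
  kchain T k X x y -> dist_le T y z k -> X z -> kchain T k X x z.
Proof.
  induction 1; intros Hyz Hz.
  - apply kchainS with z; [| | apply kchain0]; assumption.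
  - apply kchainS with y; auto.
Qed.

Lemma kchain_cat X x y z : kchain T k X x y -> kchain T k X y z -> kchain T k X x z.
Proof. induction 1; intros; [| apply kchainS with y]; auto. Qed.

Lemma kchain_sym X x y : sym_adj T -> kchain T k X x y -> kchain T k X y x.
Proof.
  intros Hsym; induction 1; [apply kchain0; assumption |].
  apply kchain_rcons with y; [| apply dist_le_sym |]; assumption.
Qed.

End Chains.

Section Blocks.

Variables (T : graph) (r : vtx T) (lam k : R).
Hypothesis Hsym : sym_adj T.

Lemma layer_unique N M x : 0 < lam -> layer T r lam N x -> layer T r lam M x -> N = M.
Proof.
  intros Hlam [n [Hn [HNl HNu]]] [m [Hm [HMl HMu]]].
  rewrite <- (dist_eq_unique _ _ _ _ _ Hn Hm) in HMl, HMu.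
  assert (HNM : IZR N < IZR (M + 1)) by (rewrite plus_IZR; nra).
  assert (HMN : IZR M < IZR (N + 1)) by (rewrite plus_IZR; nra).
  apply lt_IZR in HNM; apply lt_IZR in HMN. lia.
Qed.

(* The block of [s] is the set of points reachable from [s] by a k-chain inside its layer. *)
Lemma block_exists N s :
  layer T r lam N s -> exists B : vtx (skeleton T r lam k), proj1_sig B s.
Proof.
  intros Hs.
  set (L := layer T r lam N).
  set (C := kchain T k L s).
  assert (HB : is_block T r lam k C).
  { exists N; split; [| split; [| split]].
    - intros x Cx. exact (kchain_mem_r _ _ _ _ _ Cx).
    - exists s. apply kchain0. exact Hs.
    - intros p q Cp Cq.
      assert (Hpq : kchain T k L p q)
        by (apply kchain_cat with s; [apply kchain_sym |]; assumption).
      clear Cq; revert Cp.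
      induction Hpq as [p Lp | p q q' Lp Dpq Hqq' IH]; intro Cp; [apply kchain0; assumption |].
      apply kchainS with q; [assumption | assumption |].
      apply IH, kchain_rcons with p; [| | eapply kchain_mem_l, Hqq']; assumption.
    - intros C' HC' Hconn HsubC x C'x.
      apply kchain_sub with C'; [exact HC' |].
      apply Hconn; [apply HsubC, kchain0, Hs | exact C'x]. }
  exists (exist _ C HB). apply kchain0. exact Hs.
Qed.

(* Two blocks meeting in points of a common layer at distance at most [k] have a
   [k]-connected union inside that layer, so maximality identifies them. *)
Lemma block_eq (B1 B2 : vtx (skeleton T r lam k)) x y N :
  0 < lam -> proj1_sig B1 x -> proj1_sig B2 y -> dist_le T x y k ->
  layer T r lam N x -> layer T r lam N y -> B1 = B2.
Proof.
  destruct B1 as [P1 HP1], B2 as [P2 HP2]; simpl.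
  intros Hlam P1x P2y Hxy Lx Ly.
  pose proof HP1 as [N1 [L1 [_ [K1 M1]]]]; pose proof HP2 as [N2 [L2 [_ [K2 M2]]]].
  pose proof (layer_unique _ _ _ Hlam (L1 x P1x) Lx); subst N1.
  pose proof (layer_unique _ _ _ Hlam (L2 y P2y) Ly); subst N2.
  set (C := fun z => P1 z \/ P2 z).
  assert (LC : forall z, C z -> layer T r lam N z) by (intros z [Hz | Hz]; auto).
  assert (S1 : forall z, P1 z -> C z) by (intros; left; assumption).
  assert (S2 : forall z, P2 z -> C z) by (intros; right; assumption).
  assert (KC : k_connected T k C).
  { intros p q [Pp | Pp] [Pq | Pq]; [apply kchain_sub with P1; auto | | |
      apply kchain_sub with P2; auto].
    - apply kchain_cat with x; [apply kchain_sub with P1; auto |].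
      apply kchainS with y; [auto | assumption | apply kchain_sub with P2; auto].
    - apply kchain_cat with y; [apply kchain_sub with P2; auto |].
      apply kchainS with x; [auto | apply dist_le_sym; assumption |].
      apply kchain_sub with P1; auto. }
  assert (P1 = P2) as <-.
  { apply functional_extensionality; intro z; apply propositional_extensionality.
    split; intro Hz; [exact (M2 C LC KC S2 z (S1 z Hz)) | exact (M1 C LC KC S1 z (S2 z Hz))]. }
  f_equal. apply proof_irrelevance.
Qed.

Lemma block_dist (B : vtx (skeleton T r lam k)) x :
  proj1_sig B x -> exists d, dist_eq T x r d.
Proof.
  destruct B as [P HB]; simpl; intros Px.
  destruct HB as [N [HL _]].
  destruct (HL x Px) as [d [Hd _]]. eauto.
Qed.

Lemma skeleton_sym : sym_adj (skeleton T r lam k).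
Proof.
  intros B1 B2 [Hne [x [y [Hx [Hy Hxy]]]]].
  split; [congruence | exists y, x; auto].
Qed.

Lemma skeleton_dist_le_adj (B1 B2 : vtx (skeleton T r lam k)) x y :
  proj1_sig B1 x -> proj1_sig B2 y -> adj T x y -> dist_le (skeleton T r lam k) B1 B2 1.
Proof.
  intros Hx Hy Hxy.
  destruct (classic (B1 = B2)) as [<- | Hne].
  - apply dist_le_refl; lra.
  - apply dist_le_adj. split; [| exists x, y]; auto.
Qed.

End Blocks.

(* [ceil (n / 2) - 1]: the scale-2 layer of the points at distance [n]. *)
Definition layer2_index (n : nat) : Z := (Z.of_nat ((n + 1) / 2) - 1)%Z.

Lemma layer2_index_bounds n : (n <= 2 * ((n + 1) / 2) < n + 2)%nat.
Proof.
  pose proof (Nat.div_mod (n + 1) 2 ltac:(lia)).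
  pose proof (Nat.mod_upper_bound (n + 1) 2 ltac:(lia)).
  lia.
Qed.

Lemma layer_layer2_index (T : graph) (r x : vtx T) n :
  dist_eq T x r n -> layer T r 2 (layer2_index n) x.
Proof.
  intros Hn. exists n; split; [assumption |]. unfold layer2_index.
  destruct (layer2_index_bounds n) as [Hlo Hhi].
  set (g := ((n + 1) / 2)%nat) in *.
  apply le_INR in Hlo; apply lt_INR in Hhi.
  rewrite mult_INR in Hlo, Hhi; rewrite plus_INR in Hhi; simpl in Hlo, Hhi.
  rewrite minus_IZR, <- INR_IZR_INZ. lra.
Qed.

(* Scale-2 layers are the pairs {2N+1, 2N+2}, and the distances to the root
   change by at most one along a walk. *)
Lemma layer2_index_coincide d0 d1 d2 d3 :
  (d0 <= S d1)%nat -> (d1 <= S d0)%nat -> (d1 <= S d2)%nat -> (d2 <= S d1)%nat ->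
  (d2 <= S d3)%nat -> (d3 <= S d2)%nat ->
  layer2_index d0 = layer2_index d1 \/ layer2_index d1 = layer2_index d2 \/
  layer2_index d2 = layer2_index d3 \/ layer2_index d0 = layer2_index d2 \/
  layer2_index d1 = layer2_index d3.
Proof.
  unfold layer2_index; intros.
  pose proof (layer2_index_bounds d0); pose proof (layer2_index_bounds d1).
  pose proof (layer2_index_bounds d2); pose proof (layer2_index_bounds d3).
  lia.
Qed.

Lemma dist_le_path3_shortcut (T : graph) (B0 B1 B2 B3 : vtx T) :
  dist_le T B0 B1 1 -> dist_le T B1 B2 1 -> dist_le T B2 B3 1 ->
  B0 = B1 \/ B1 = B2 \/ B2 = B3 \/ B0 = B2 \/ B1 = B3 ->
  dist_le T B0 B3 2.
Proof.
  replace 2 with (1 + 1) by lra.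
  intros H01 H12 H23 [<- | [<- | [<- | [<- | <-]]]].
  - apply dist_le_trans with B2; assumption.
  - apply dist_le_trans with B1; assumption.
  - apply dist_le_trans with B1; assumption.
  - apply dist_le_weaken with 1; [lra | assumption].
  - apply dist_le_weaken with 1; [lra | assumption].
Qed.

Section Scale2.

Variables (T : graph) (r : vtx T).
Hypothesis Hsym : sym_adj T.

Let K := skeleton T r 2 2.

Lemma block_cover x d : dist_eq T x r d -> exists B : vtx K, proj1_sig B x.
Proof. intros Hd. exact (block_exists T r 2 2 Hsym _ _ (layer_layer2_index _ _ _ _ Hd)). Qed.

Lemma block_eq_layer2 (B1 B2 : vtx K) x y dx dy :
  proj1_sig B1 x -> proj1_sig B2 y -> dist_le T x y 2 ->
  dist_eq T x r dx -> dist_eq T y r dy -> layer2_index dx = layer2_index dy -> B1 = B2.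
Proof.
  intros Hx Hy Hxy Hdx Hdy Hidx.
  apply (block_eq T r 2 2 Hsym B1 B2 x y (layer2_index dx)); try assumption; [lra | |].
  - apply layer_layer2_index; assumption.
  - rewrite Hidx. apply layer_layer2_index; assumption.
Qed.

Lemma skeleton2_dist_le_reach n x y (B1 B2 : vtx K) :
  proj1_sig B1 x -> proj1_sig B2 y -> reach T n x y -> dist_le K B1 B2 (INR n).
Proof.
  intros Hx Hy Hn; revert B1 Hx.
  induction Hn as [x | n x x' y Hxx' _ IH]; intros B1 Hx.
  - replace B2 with B1; [apply dist_le_refl; simpl; lra |].
    destruct (block_dist T r 2 2 B1 x Hx) as [d Hd].
    apply (block_eq_layer2 B1 B2 x x d d); auto. apply dist_le_refl; lra.
  - destruct (block_dist T r 2 2 B1 x Hx) as [d Hd].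
    destruct (dist_eq_adj T x x' r d Hsym Hd Hxx') as [d' [Hd' _]].
    destruct (block_cover x' d' Hd') as [B' HB'].
    rewrite S_INR, Rplus_comm.
    apply dist_le_trans with B'; [apply (skeleton_dist_le_adj T r 2 2 B1 B' x x') | apply IH];
      assumption.
Qed.

Lemma skeleton2_dist_le_walk3 a s1 s2 b (B0 B3 : vtx K) :
  proj1_sig B0 a -> proj1_sig B3 b -> adj T a s1 -> adj T s1 s2 -> adj T s2 b ->
  dist_le K B0 B3 2.
Proof.
  intros Ha Hb A1 A2 A3.
  destruct (block_dist T r 2 2 B0 a Ha) as [d0 D0].
  destruct (dist_eq_adj T a s1 r d0 Hsym D0 A1) as [d1 [D1 [Hd10 Hd01]]].
  destruct (dist_eq_adj T s1 s2 r d1 Hsym D1 A2) as [d2 [D2 [Hd21 Hd12]]].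
  destruct (dist_eq_adj T s2 b r d2 Hsym D2 A3) as [d3 [D3 [Hd32 Hd23]]].
  destruct (block_cover s1 d1 D1) as [B1 Hs1].
  destruct (block_cover s2 d2 D2) as [B2 Hs2].
  apply (dist_le_path3_shortcut K B0 B1 B2 B3);
    [apply (skeleton_dist_le_adj T r 2 2 _ _ a s1) |
     apply (skeleton_dist_le_adj T r 2 2 _ _ s1 s2) |
     apply (skeleton_dist_le_adj T r 2 2 _ _ s2 b) |]; try assumption.
  assert (Hadj_2 : forall x y, adj T x y -> dist_le T x y 2)
    by (intros; apply dist_le_weaken with 1; [lra | apply dist_le_adj; assumption]).
  destruct (layer2_index_coincide d0 d1 d2 d3) as [E | [E | [E | [E | E]]]]; try assumption;
    [left | right; left | do 2 right; left | do 3 right; left | do 4 right];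
    eapply block_eq_layer2; eauto; eapply dist_le_adj2; eassumption.
Qed.

Lemma skeleton2_dist_le_reach3 n x y (B1 B2 : vtx K) :
  proj1_sig B1 x -> proj1_sig B2 y -> reach T n x y -> (n <= 3)%nat ->
  dist_le K B1 B2 2.
Proof.
  intros Hx Hy Hn Hle.
  destruct (Nat.le_gt_cases n 2) as [H2 | H3].
  - apply dist_le_weaken with (INR n); [apply le_INR in H2; simpl in H2; lra |].
    apply (skeleton2_dist_le_reach n x y); assumption.
  - assert (n = 3%nat) as -> by lia.
    inversion Hn as [| ? ? s1 ? A1 R1]; subst.
    inversion R1 as [| ? ? s2 ? A2 R2]; subst.
    inversion R2 as [| ? ? ? ? A3 R3]; subst.
    inversion R3; subst.
    apply (skeleton2_dist_le_walk3 x s1 s2 y); assumption.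
Qed.

End Scale2.

(* r1 is the block of G_{lam,k} containing the root x0 (the root of G'');
   u, w are vertices of G'' = (G_{lam,k})_{(2,2)}; the preimage of a vertex
   U of G'' under the natural map G_{lam,k} -> G'' is the block U itself. *)
Theorem lemma5 (G : graph) (x0 : vtx G) (lam k : R)
  (HG : simple_graph G) (Hconn : connected G)
  (Hlam : 1 <= lam) (Hk : 1 <= k)
  (r1 : vtx (skeleton G x0 lam k)) (Hr1 : proj1_sig r1 x0)
  (u w : vtx (skeleton (skeleton G x0 lam k) r1 2 2)) :
  r_disjoint (skeleton (skeleton G x0 lam k) r1 2 2) 2
    (fun z => z = u) (fun z => z = w) ->
  r_disjoint (skeleton G x0 lam k) 3 (proj1_sig u) (proj1_sig w).
Proof.
  intros Hdisj a b Ua Wb [n [Hn Hn3]].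
  apply (Hdisj u w eq_refl eq_refl).
  apply (skeleton2_dist_le_reach3 _ r1 (skeleton_sym G x0 lam k (proj1 HG)) n a b);
    try assumption.
  apply INR_le. simpl. lra.
Qed.
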